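(* Let $\psi(x)=-2\pi\sin(2\pi x)$, $b\ge2$ an integer, $\gamma\in(1/b,1)$. Let $x^*\in[0,1/2]$ and $0\le k<l<b$ with $(k,l)\in E(1,x^* )$. Then for any $\kappa\in(0,1)$, either $$\Big|\cos\tfrac{2\pi(x^*+k)}{b}-\cos\tfrac{2\pi(x^*+l)}{b}\Big|\le\frac{2\gamma\sqrt{1-\kappa^2}}{b}+\frac{2\gamma^2}{b(b-\gamma)},$$ or $$\Big|\sin\tfrac{2\pi(x^*+k)}{b}-\sin\tfrac{2\pi(x^*+l)}{b}\Big|\le2\kappa\gamma+\frac{2\gamma^2}{1-\gamma}.$$
   Context: $\mathcal{A}=\{0,\dots,b-1\}$. $S(x,\mathbf{i})=\sum_{n\ge1}\gamma^{n-1}\psi\big(\frac{x+i_1+i_2b+\cdots+i_nb^{n-1}}{b^n}\big)$ for $\mathbf{i}\in\mathcal{A}^{\mathbb{Z}^+}$, $S'=\partial_xS$. Sequences $\mathbf{i},\mathbf{j}$ are $(\varepsilon,\delta)$-tangent at $x_0$ if $|S(x_0,\mathbf{i})-S(x_0,\mathbf{j})|\le\varepsilon$ and $|S'(x_0,\mathbf{i})-S'(x_0,\mathbf{j})|\le\delta$. $E(1,x_0;\varepsilon,\delta)$ is the set of pairs $(k,l)\in\mathcal{A}\times\mathcal{A}$ such that for some $\mathbf{u},\mathbf{v}\in\mathcal{A}^{\mathbb{Z}^+}$ the sequences $k\mathbf{u},l\mathbf{v}$ are $(\varepsilon,\delta)$-tangent at $x_0$; $E(1,x_0)=\bigcap_{\varepsilon,\delta>0}E(1,x_0;\varepsilon,\delta)$.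 *)

From Stdlib Require Import Reals Lra ClassicalEpsilon.
Open Scope R_scope.

Definition psi (x : R) : R := - 2 * PI * sin (2 * PI * x).

(* A sequence i in A^{Z+} is a function nat -> nat; i_1 = i 0, i_2 = i 1, ...
   It is admissible when all digits are < b. *)
Definition digit_seq (b : nat) (i : nat -> nat) : Prop := forall n, (i n < b)%nat.

Definition scons (k : nat) (u : nat -> nat) : nat -> nat :=
  fun n => match n with O => k | S m => u m end.

(* n-th term (n starting at 0, i.e. paper's index n+1):
   gamma^n * psi((x + i_1 + i_2 b + ... + i_{n+1} b^n) / b^(n+1)) *)
Definition S_term (b : nat) (gamma x : R) (i : nat -> nat) (n : nat) : R :=
  gamma ^ n * psi ((x + sum_f_R0 (fun j => INR (i j) * INR b ^ j) n) / INR b ^ (S n)).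

(* S(x,i): the sum of the series (chosen by Hilbert's epsilon; the series
   converges absolutely for 0 < gamma < 1). *)
Definition Ssum (b : nat) (gamma x : R) (i : nat -> nat) : R :=
  epsilon (inhabits 0) (fun l => infinite_sum (S_term b gamma x i) l).

Definition tangent (b : nat) (gamma x0 eps delta : R) (i j : nat -> nat) : Prop :=
  Rabs (Ssum b gamma x0 i - Ssum b gamma x0 j) <= eps /\
  exists d1 d2 : R,
    derivable_pt_lim (fun x => Ssum b gamma x i) x0 d1 /\
    derivable_pt_lim (fun x => Ssum b gamma x j) x0 d2 /\
    Rabs (d1 - d2) <= delta.

Definition E1_eps (b : nat) (gamma x0 eps delta : R) (k l : nat) : Prop :=
  (k < b)%nat /\ (l < b)%nat /\
  exists u v : nat -> nat, digit_seq b u /\ digit_seq b v /\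
    tangent b gamma x0 eps delta (scons k u) (scons l v).

Definition E_one (b : nat) (gamma x0 : R) (k l : nat) : Prop :=
  forall eps delta : R, 0 < eps -> 0 < delta -> E1_eps b gamma x0 eps delta k l.

(** Keeping the first two digits, [S(x, i) = -2π (sin a_1 + γ sin a_2) + R(x)]
    where [a_n = 2π (x + i_1 + ... + i_n b^(n-1)) / b^n], [|R| <= 2πγ²/(1-γ)] and
    [R] is Lipschitz with constant [4π²γ²/(b²(b-γ))], which bounds [|R'(x)|].
    Hence tangency of [k u] and [l v] forces
    [|sin a_1 - sin a_1'| <= γ |sin a_2 - sin a_2'|] and
    [|cos a_1 - cos a_1'| <= (γ/b) |cos a_2 - cos a_2'|] up to these errors.
    Since [(a_2, a_2')] spans a chord of the unit circle, either its sine gap is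
    at most [2κ] or its cosine gap is at most [2 sqrt(1-κ²)]. *)

From Stdlib Require Import Reals Lra Lia ClassicalEpsilon.
From Coquelicot Require Import Coquelicot.
Open Scope R_scope.

Lemma Rabs_sin_sub_le (a c : R) : Rabs (sin a - sin c) <= Rabs (a - c).
Proof.
  destruct (MVT_abs sin cos c a) as [z [Hz _]].
  { intros; apply derivable_pt_lim_sin. }
  rewrite Hz. rewrite <- (Rmult_1_l (Rabs (a - c))) at 2.
  apply Rmult_le_compat_r; [apply Rabs_pos|].
  apply Rabs_le, COS_bound.
Qed.

Lemma chord_sin_or_cos_le (p q kappa : R) : 0 < kappa < 1 ->
  Rabs (sin p - sin q) <= 2 * kappa \/
  Rabs (cos p - cos q) <= 2 * sqrt (1 - kappa ^ 2).
Proof.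
  intros Hk.
  destruct (Rle_dec (Rabs (sin p - sin q)) (2 * kappa)) as [Hs|Hs]; [now left|right].
  apply Rnot_le_lt in Hs.
  assert (Hp := sin2_cos2 p). assert (Hq := sin2_cos2 q). unfold Rsqr in Hp, Hq.
  assert (Hsq : sqrt (1 - kappa ^ 2) * sqrt (1 - kappa ^ 2) = 1 - kappa ^ 2)
    by (apply sqrt_sqrt; nra).
  assert (Hsqrt := sqrt_pos (1 - kappa ^ 2)).
  assert (Hsin := Rsqr_abs (sin p - sin q)). assert (Hcos := Rsqr_abs (cos p - cos q)).
  unfold Rsqr in Hsin, Hcos.
  assert (Hchord : (cos p - cos q) * (cos p - cos q) + (sin p - sin q) * (sin p - sin q) <= 4).
  { assert (Hc2 := Rle_0_sqr (cos p + cos q)). assert (Hs2 := Rle_0_sqr (sin p + sin q)).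
    unfold Rsqr in Hc2, Hs2. nra. }
  assert (Hc := Rabs_pos (cos p - cos q)).
  apply Rnot_lt_le; intro. nra.
Qed.

Lemma le_or_le_of_forall_eps (x1 c1 x2 c2 : R) :
  (forall eps, 0 < eps -> x1 <= c1 + eps \/ x2 <= c2 + eps) -> x1 <= c1 \/ x2 <= c2.
Proof.
  intros H.
  destruct (Rle_dec x1 c1) as [H1|H1]; [now left|right].
  destruct (Rle_dec x2 c2) as [H2|H2]; [easy|exfalso].
  apply Rnot_le_lt in H1, H2.
  set (eps := Rmin (x1 - c1) (x2 - c2)).
  assert (Hl := Rmin_l (x1 - c1) (x2 - c2)). assert (Hr := Rmin_r (x1 - c1) (x2 - c2)).
  assert (Heps : 0 < eps) by (apply Rmin_glb_lt; lra).
  destruct (H (eps / 2)) as [H'|H']; unfold eps in *; lra.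
Qed.

Lemma Rabs_sub_le_of_near_affine (s1 s2 x1 x2 y1 y2 P Q T eps K : R) :
  0 < P -> 0 <= Q ->
  Rabs (s1 + P * (x1 + Q * y1)) <= T -> Rabs (s2 + P * (x2 + Q * y2)) <= T ->
  Rabs (s1 - s2) <= P * eps -> Rabs (y1 - y2) <= K ->
  Rabs (x1 - x2) <= eps + Q * K + 2 * T / P.
Proof.
  intros HP HQ H1 H2 Hs Hy.
  assert (HPy : Rabs (P * Q * (y1 - y2)) <= P * Q * K).
  { rewrite Rabs_mult, (Rabs_pos_eq (P * Q)) by nra.
    apply Rmult_le_compat_l; nra. }
  apply Rabs_le_between in H1, H2, Hs, HPy.
  assert (Hx : Rabs (P * (x1 - x2)) <= P * eps + P * Q * K + 2 * T)
    by (apply Rabs_le_between; split; nra).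
  rewrite Rabs_mult, (Rabs_pos_eq P) in Hx by lra.
  apply Rmult_le_reg_l with P; [lra|].
  replace (P * (eps + Q * K + 2 * T / P)) with (P * eps + P * Q * K + 2 * T) by (field; lra).
  exact Hx.
Qed.

Lemma derivable_pt_lim_Rabs_le (f : R -> R) (x0 d L : R) :
  derivable_pt_lim f x0 d ->
  (forall x, Rabs (f x - f x0) <= L * Rabs (x - x0)) -> Rabs d <= L.
Proof.
  intros Hd HL. apply Rnot_lt_le; intro Hlt.
  destruct (Hd (Rabs d - L)) as [delta Hdelta]; [lra|].
  assert (Hdelta0 := cond_pos delta).
  set (h := delta / 2).
  assert (Hh : 0 < h) by (unfold h; lra).
  specialize (Hdelta h ltac:(lra) ltac:(rewrite Rabs_pos_eq; unfold h; lra)).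
  set (q := (f (x0 + h) - f x0) / h) in *.
  assert (Hq : Rabs q <= L).
  { specialize (HL (x0 + h)).
    replace (x0 + h - x0) with h in HL by ring.
    unfold q, Rdiv. rewrite Rabs_mult, Rabs_inv, (Rabs_pos_eq h) in * by lra.
    apply Rmult_le_reg_r with h; [lra|].
    field_simplify; lra. }
  assert (Hd_le : Rabs d <= Rabs q + Rabs (q - d)).
  { rewrite <- (Rabs_Ropp (q - d)).
    replace d with (q + - (q - d)) at 1 by ring. apply Rabs_triang. }
  lra.
Qed.

Lemma series_tail_le (g a : nat -> R) (G A : R) (N : nat) :
  (forall n, Rabs (g n) <= a n) -> is_series g G -> is_series a A ->
  Rabs (G - sum_n g N) <= A - sum_n a N.
Proof.
  intros Hga Hg Ha.
  assert (Htail : forall (c : nat -> R) (C : R), is_series c C ->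
            is_series (fun k => c (S N + k)%nat) (C - sum_n c N)).
  { intros c C HC. apply (is_series_incr_n c (S N)); [lia|].
    unfold plus; simpl. unfold Rminus. now rewrite Rplus_assoc, Rplus_opp_l, Rplus_0_r. }
  rewrite <- (is_series_unique _ _ (Htail g G Hg)),
          <- (is_series_unique _ _ (Htail a A Ha)).
  assert (Hex : ex_series (fun k => a (S N + k)%nat)) by (eexists; apply Htail, Ha).
  eapply Rle_trans; [apply Series_Rabs|apply Series_le; [|exact Hex]].
  - refine (@ex_series_le R_AbsRing R_CompleteNormedModule _ _ _ Hex).
    intros n. change (Rabs (Rabs (g (S N + n)%nat)) <= a (S N + n)%nat).
    rewrite Rabs_Rabsolu. apply Hga.
  - intros n. split; [apply Rabs_pos|apply Hga].
Qed.

Lemma is_series_geom_scal (c q : R) :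
  Rabs q < 1 -> is_series (fun n => c * q ^ n) (c / (1 - q)).
Proof. intros Hq. exact (is_series_scal_l c _ _ (is_series_geom q Hq)). Qed.

(** The angle [a_(n+1)] above (digits are indexed from [0]), so that
    [S_term b γ x i n = γ^n ψ(a_(n+1) / 2π)]. *)
Definition digit_angle (b : nat) (x : R) (i : nat -> nat) (n : nat) : R :=
  2 * PI * ((x + sum_f_R0 (fun j => INR (i j) * INR b ^ j) n) / INR b ^ S n).

Lemma digit_angle_scons_0 (b : nat) (x : R) (k : nat) (u : nat -> nat) :
  0 < INR b -> digit_angle b x (scons k u) 0 = 2 * PI * (x + INR k) / INR b.
Proof. intros Hb. unfold digit_angle; simpl. field. lra. Qed.

Lemma S_term_eq (b : nat) (gamma x : R) (i : nat -> nat) (n : nat) :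
  S_term b gamma x i n = - (2 * PI * gamma ^ n) * sin (digit_angle b x i n).
Proof. unfold S_term, psi, digit_angle. ring. Qed.

Lemma sum_n_S_term_1 (b : nat) (gamma x : R) (i : nat -> nat) :
  sum_n (S_term b gamma x i) 1 =
  - (2 * PI * (sin (digit_angle b x i 0) + gamma * sin (digit_angle b x i 1))).
Proof. rewrite sum_n_Reals; simpl. rewrite !S_term_eq. ring. Qed.

Section TwoDigitApproximation.

Variables (b : nat) (gamma : R).
Hypothesis Hgamma : 0 <= gamma < 1.
Hypothesis Hb : 1 <= INR b.

Lemma S_term_Rabs_le (x : R) (i : nat -> nat) (n : nat) :
  Rabs (S_term b gamma x i n) <= 2 * PI * gamma ^ n.
Proof.
  assert (HPI := PI_RGT_0). assert (Hgn : 0 <= gamma ^ n) by (apply pow_le; lra).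
  rewrite S_term_eq, Rabs_mult, Rabs_Ropp, Rabs_pos_eq by nra.
  rewrite <- (Rmult_1_r (2 * PI * gamma ^ n)) at 2.
  apply Rmult_le_compat_l; [nra|]. apply Rabs_le, SIN_bound.
Qed.

Lemma S_term_lipschitz (x y : R) (i : nat -> nat) (n : nat) :
  Rabs (S_term b gamma x i n - S_term b gamma y i n)
  <= 4 * PI ^ 2 / INR b * (gamma / INR b) ^ n * Rabs (x - y).
Proof.
  assert (HPI := PI_RGT_0). assert (Hgn : 0 <= gamma ^ n) by (apply pow_le; lra).
  assert (Hbn : 0 < INR b ^ n) by (apply pow_lt; lra).
  rewrite !S_term_eq, <- Rmult_minus_distr_l, Rabs_mult, Rabs_Ropp, Rabs_pos_eq by nra.
  eapply Rle_trans; [apply Rmult_le_compat_l; [nra|apply Rabs_sin_sub_le]|].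
  replace (digit_angle b x i n - digit_angle b y i n) with (2 * PI / INR b ^ S n * (x - y))
    by (unfold digit_angle; simpl; field; lra).
  rewrite Rabs_mult, (Rabs_pos_eq (2 * PI / _)) by (apply Rlt_le, Rdiv_lt_0_compat; simpl; nra).
  right. unfold Rdiv. rewrite Rpow_mult_distr, pow_inv. simpl. field. lra.
Qed.

Lemma is_derive_S_term (x0 : R) (i : nat -> nat) (n : nat) :
  is_derive (fun x => S_term b gamma x i n) x0
    (- (4 * PI ^ 2 / INR b * (gamma / INR b) ^ n) * cos (digit_angle b x0 i n)).
Proof.
  assert (Hbn : 0 < INR b ^ n) by (apply pow_lt; lra).
  apply (is_derive_ext (fun x => - (2 * PI * gamma ^ n) * sin (digit_angle b x i n))).
  { intros x. symmetry. apply S_term_eq. }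
  unfold digit_angle. auto_derive; [exact I|].
  unfold Rdiv. rewrite Rpow_mult_distr, pow_inv. simpl. field. lra.
Qed.

Lemma Ssum_is_series (x : R) (i : nat -> nat) :
  is_series (S_term b gamma x i) (Ssum b gamma x i).
Proof.
  apply is_series_Reals. unfold Ssum. apply epsilon_spec.
  assert (Hgeom := is_series_geom_scal (2 * PI) gamma ltac:(rewrite Rabs_pos_eq; lra)).
  destruct (@ex_series_le R_AbsRing R_CompleteNormedModule (S_term b gamma x i) _
              (S_term_Rabs_le x i) (ex_intro _ _ Hgeom)) as [l Hl].
  exists l. now apply is_series_Reals.
Qed.

Lemma Ssum_approx (x : R) (i : nat -> nat) :
  Rabs (Ssum b gamma x i + 2 * PI * (sin (digit_angle b x i 0) + gamma * sin (digit_angle b x i 1)))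
  <= 2 * PI * gamma ^ 2 / (1 - gamma).
Proof.
  assert (T := series_tail_le _ _ _ _ 1 (S_term_Rabs_le x i) (Ssum_is_series x i)
                 (is_series_geom_scal (2 * PI) gamma ltac:(rewrite Rabs_pos_eq; lra))).
  rewrite sum_n_S_term_1 in T.
  eapply Rle_trans; [|eapply Rle_trans; [exact T|right]].
  - right. f_equal. ring.
  - rewrite sum_n_Reals. simpl. field. lra.
Qed.

Lemma Ssum_derive_approx (x0 : R) (i : nat -> nat) (d : R) :
  derivable_pt_lim (fun x => Ssum b gamma x i) x0 d ->
  Rabs (d + 4 * PI ^ 2 / INR b
              * (cos (digit_angle b x0 i 0) + gamma / INR b * cos (digit_angle b x0 i 1)))
  <= 4 * PI ^ 2 * gamma ^ 2 / (INR b ^ 2 * (INR b - gamma)).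
Proof.
  intros Hd.
  set (rem x := Ssum b gamma x i - sum_n (S_term b gamma x i) 1).
  assert (Hrem : derivable_pt_lim rem x0
                   (d - (- (4 * PI ^ 2 / INR b * (gamma / INR b) ^ 0) * cos (digit_angle b x0 i 0)
                         + - (4 * PI ^ 2 / INR b * (gamma / INR b) ^ 1) * cos (digit_angle b x0 i 1)))).
  { apply is_derive_Reals.
    apply (is_derive_ext (fun x => Ssum b gamma x i - (S_term b gamma x i 0 + S_term b gamma x i 1))).
    { intros x. unfold rem. rewrite sum_n_Reals. reflexivity. }
    exact (is_derive_minus _ _ _ _ _ (proj2 (is_derive_Reals _ _ _) Hd)
             (is_derive_plus _ _ _ _ _ (is_derive_S_term x0 i 0) (is_derive_S_term x0 i 1))). }
  assert (Hlip : forall x, Rabs (rem x - rem x0)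
                   <= 4 * PI ^ 2 * gamma ^ 2 / (INR b ^ 2 * (INR b - gamma)) * Rabs (x - x0)).
  { intros x.
    assert (Hq : Rabs (gamma / INR b) < 1)
      by (rewrite Rabs_pos_eq; [apply Rmult_lt_reg_r with (INR b); [lra|]; field_simplify|
                                apply Rdiv_le_0_compat]; lra).
    assert (T := series_tail_le _ _ _ _ 1 (S_term_lipschitz x x0 i)
                   (is_series_minus _ _ _ _ (Ssum_is_series x i) (Ssum_is_series x0 i))
                   (is_series_scal_r (Rabs (x - x0)) _ _ (is_series_geom_scal _ _ Hq))).
    eapply Rle_trans; [|eapply Rle_trans; [exact T|right]].
    - right. f_equal. unfold rem. rewrite !sum_n_Reals. simpl. unfold plus, opp. simpl. ring.
    - rewrite sum_n_Reals. simpl. field. lra. }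
  eapply Rle_trans; [|exact (derivable_pt_lim_Rabs_le rem x0 _ _ Hrem Hlip)].
  right. f_equal. simpl. field. lra.
Qed.

End TwoDigitApproximation.

Theorem lemma4p1 (b : nat) (gamma xs kappa : R) (k l : nat) :
  (2 <= b)%nat ->
  / INR b < gamma -> gamma < 1 ->
  0 <= xs -> xs <= / 2 ->
  (k < l)%nat -> (l < b)%nat ->
  E_one b gamma xs k l ->
  0 < kappa -> kappa < 1 ->
  Rabs (cos (2 * PI * (xs + INR k) / INR b) - cos (2 * PI * (xs + INR l) / INR b))
    <= 2 * gamma * sqrt (1 - kappa ^ 2) / INR b
       + 2 * gamma ^ 2 / (INR b * (INR b - gamma))
  \/
  Rabs (sin (2 * PI * (xs + INR k) / INR b) - sin (2 * PI * (xs + INR l) / INR b))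
    <= 2 * kappa * gamma + 2 * gamma ^ 2 / (1 - gamma).
Proof.
  intros Hb2 Hbg Hg1 _ _ _ _ HE Hk0 Hk1.
  assert (Hb : 2 <= INR b) by (apply le_INR in Hb2; simpl in Hb2; lra).
  assert (Hg0 : 0 < gamma) by (assert (0 < / INR b) by (apply Rinv_0_lt_compat; lra); lra).
  assert (Hg : 0 <= gamma < 1) by lra.
  assert (HPI := PI_RGT_0).
  apply le_or_le_of_forall_eps. intros e He.
  destruct (HE (2 * PI * e) (4 * PI ^ 2 / INR b * e)) as
    [_ [_ [u [v [_ [_ [Hval [d1 [d2 [Hd1 [Hd2 Hder]]]]]]]]]]];
    [nra|apply Rmult_lt_0_compat; [apply Rdiv_lt_0_compat|]; nra|].
  rewrite <- (digit_angle_scons_0 b xs k u), <- (digit_angle_scons_0 b xs l v) by lra.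
  assert (H2PI : 0 < 2 * PI) by lra.
  assert (H4PI : 0 < 4 * PI ^ 2 / INR b) by (apply Rdiv_lt_0_compat; nra).
  assert (Hgb : 0 <= gamma / INR b) by (apply Rdiv_le_0_compat; lra).
  destruct (chord_sin_or_cos_le (digit_angle b xs (scons k u) 1)
                                (digit_angle b xs (scons l v) 1) kappa) as [C|C]; [lra| |].
  - right.
    eapply Rle_trans.
    { exact (Rabs_sub_le_of_near_affine _ _ _ _ _ _ _ _ _ _ _ H2PI (Rlt_le _ _ Hg0)
               (Ssum_approx b gamma Hg xs (scons k u)) (Ssum_approx b gamma Hg xs (scons l v))
               Hval C). }
    right. field. lra.
  - left.
    eapply Rle_trans.
    { exact (Rabs_sub_le_of_near_affine _ _ _ _ _ _ _ _ _ _ _ H4PI Hgb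
               (Ssum_derive_approx b gamma Hg ltac:(lra) xs (scons k u) d1 Hd1)
               (Ssum_derive_approx b gamma Hg ltac:(lra) xs (scons l v) d2 Hd2)
               Hder C). }
    right. field. lra.
Qed.
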